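(* Let $\mathbb{L}$ be an algebraically closed field, $a\in\mathbb{L}^{\times}$, $\Bbbk=\mathbb{L}(x)$ the field of rational functions, and $\sigma$ the automorphism of $\Bbbk$ which is the identity on $\mathbb{L}$ and sends $x\mapsto x+a$. Let $G_\sigma=\{\frac{r}{\sigma(r)}: r\in\Bbbk^\times\}$. Consider the group isomorphism $\mathbb{L}(x)^{\times}\to \mathbb{L}^{\times}\times \mathrm{Fsfun}(\mathbb{L},\mathbb{Z})$, $\alpha\mapsto (c_\alpha,\mathtt{m}_\alpha)$. Then the restriction of this isomorphism to $G_\sigma$ is an isomorphism of $G_\sigma$ onto $\{1\}\times\mathrm{Fsfun}_\sigma(\mathbb{L},\mathbb{Z})$; in other words, $\beta\mapsto \mathtt{m}_\beta$ defines a group isomorphism $G_\sigma\cong \mathrm{Fsfun}_\sigma(\mathbb{L},\mathbb{Z})$.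
   Context: Every $\alpha\in\mathbb{L}(x)^{\times}$ can be uniquely written as $\alpha=c_\alpha\prod_{t\in\mathbb{L}}(x-t)^{\mathtt{m}_\alpha(t)}$ with $c_\alpha\in\mathbb{L}^{\times}$ and $\mathtt{m}_\alpha:\mathbb{L}\to\mathbb{Z}$ a function with finite support (i.e. $\mathtt{m}_\alpha(t)\neq 0$ for only finitely many $t$). $\mathrm{Fsfun}(\mathbb{L},\mathbb{Z})$ denotes the additive group of all functions $\mathbb{L}\to\mathbb{Z}$ with finite support, and $\mathrm{Fsfun}_\sigma(\mathbb{L},\mathbb{Z})$ denotes its subgroup of those $\mathtt{m}$ such that $\sum_{i\in\mathbb{Z}}\mathtt{m}(t+ia)=0$ for every $t\in\mathbb{L}$. *)

From HB Require Import structures.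
From mathcomp Require Import all_boot all_order all_algebra.
From mathcomp Require Import generic_quotient fraction.
From mathcomp Require Import finmap.
From mathcomp Require Import boolp.
Set Implicit Arguments. Unset Strict Implicit. Unset Printing Implicit Defensive.
Import Order.TTheory GRing.Theory Num.Theory.
Local Open Scope ring_scope.

Notation ratfun L := {fraction {poly L}}.

Notation FsfunZ L := {fsfun L -> int for fun _ => 0%R}.

Notation tofrac := (@FracField.tofrac _).
Notation "x %:F" := (tofrac x) : ring_scope.

Section Defs.
Variable L : closedFieldType.

Definition sigma (a : L) (r : ratfun L) : ratfun L :=
  let pq := repr r in
  ((\n_pq \Po ('X + a%:P))%:F) / ((\d_pq \Po ('X + a%:P))%:F).

Definition Gsigma (a : L) (beta : ratfun L) : Prop :=
  exists r : ratfun L, r != 0 /\ beta = r / sigma a r.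

(* alpha = c * prod_t (x - t)^(m t), with c in L^x and m finitely supported:
   i.e. (c, m) = (c_alpha, m_alpha). *)
Definition factorization (alpha : ratfun L) (c : L) (m : FsfunZ L) : Prop :=
  c != 0 /\
  alpha = (c%:P)%:F * \prod_(t <- finsupp m) ((('X - t%:P)%:F) ^ (m t)).

Definition in_orbit (a t s : L) : Prop := exists i : int, s = t + i%:~R * a.

Definition Fsfun_sigma (a : L) (m : FsfunZ L) : Prop :=
  forall t : L,
    \sum_(s <- finsupp m | `[< in_orbit a t s >]) m s = 0.

End Defs.

(** Write r = n/d with n and d split into linear factors over the algebraically
    closed field L.  Since sigma moves a root t of a polynomial to t - a, inside
    its orbit t + Za, the leading coefficients cancel in r/sigma(r) and every
    orbit carries as many zeros as poles of r/sigma(r), counted with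
    multiplicity; so c = 1 and m sums to zero on each orbit.  Conversely, if m
    sums to zero on every orbit, pick a representative rho(t) in the orbit of
    each t: then prod_t (x - rho(t))^(m t) = 1, so
    beta = prod_t ((x - t)/(x - rho(t)))^(m t), and every
    (x - t)/(x - t - i a) is a telescoping product of the elements
    (x - s)/(x - s + a) = (x - s)/sigma(x - s) of G_sigma. *)

From Pilot Require Import Defs.
From HB Require Import structures.
From mathcomp Require Import all_boot all_order all_algebra.
From mathcomp Require Import generic_quotient fraction finmap boolp.
From mathcomp Require Import ring.
Set Implicit Arguments.
Unset Strict Implicit.
Unset Printing Implicit Defensive.
Import GRing.Theory.
Local Open Scope ring_scope.
Local Open Scope quotient_scope.

Lemma pi_ratio_mul_denom (R : idomainType) (r : {ratio R}) :
  \pi_{fraction R} r * (\d_r)%:F = (\n_r)%:F.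
Proof.
unlock tofrac; rewrite -[_ * _](FracField.pi_mul r (Ratio \d_r 1)).
apply/eqmodP; rewrite /= FracField.equivfE /FracField.mulf.
have d0 := denom_ratioP r.
rewrite !numden_Ratio ?oner_eq0 ?mulf_neq0 ?oner_eq0 //.
by apply/eqP; ring.
Qed.

Lemma fracE {R : idomainType} (x : {fraction R}) :
  x = (\n_(repr x))%:F / (\d_(repr x))%:F.
Proof.
have d0 : \d_(repr x) != 0 by exact: denom_ratioP.
by rewrite -pi_ratio_mul_denom mulfK ?tofrac_eq0 // reprK.
Qed.

Lemma fracP {R : idomainType} (x : {fraction R}) :
  exists n d, d != 0 /\ x = n%:F / d%:F.
Proof.
by exists \n_(repr x), \d_(repr x); split; [exact: denom_ratioP | exact: fracE].
Qed.

Section RootsWithMultiplicity.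
Variable T : eqType.

Definition roots_mult (S : seq T) (e : T -> nat) : seq T :=
  flatten [seq nseq (e t) t | t <- S].

Lemma count_roots_mult (P : pred T) S e :
  count P (roots_mult S e) = (\sum_(t <- S | P t) e t)%N.
Proof.
elim: S => [|t S IH]; first by rewrite big_nil.
rewrite /roots_mult /= count_cat count_nseq -/(roots_mult S e) IH big_cons.
by case: (P t); rewrite ?mul1n ?mul0n.
Qed.

Lemma prod_roots_mult (R : comNzRingType) (F : T -> R) S e :
  \prod_(z <- roots_mult S e) F z = \prod_(t <- S) F t ^+ e t.
Proof.
by rewrite big_flatten big_map; apply: eq_bigr => t _; rewrite big_nseq iter_mulr_1.
Qed.

End RootsWithMultiplicity.

Definition pos_part (k : int) : nat := if k is Posz n then n else 0.
Definition neg_part (k : int) : nat := if k is Negz n then n.+1 else 0.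

Lemma pos_neg_partE (k : int) : k = (pos_part k)%:Z - (neg_part k)%:Z.
Proof. by case: k => n //=; rewrite ?subr0 // NegzE sub0r. Qed.

Lemma expfz_pos_neg_part (F : fieldType) (x : F) (k : int) :
  x ^ k = x ^+ pos_part k / x ^+ neg_part k.
Proof. by case: k => n /=; rewrite ?expr0 ?invr1 ?mulr1 ?mul1r. Qed.

Section LinearFactors.
Variable F : fieldType.

Local Notation PX s := (\prod_(z <- s) ('X - z%:P) : {poly F}).

Lemma mul_scale_prod_XsubC (c1 c2 : F) (s1 s2 : seq F) :
  (c1 *: PX s1) * (c2 *: PX s2) = (c1 * c2) *: PX (s1 ++ s2).
Proof. by rewrite big_cat -scalerAl -scalerAr scalerA. Qed.

Lemma tofrac_scale_div (c : F) (p q : {poly F}) :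
  c != 0 -> (c *: p)%:F / (c *: q)%:F = p%:F / q%:F.
Proof.
move=> c0; rewrite -!mul_polyC !tofracM -mulf_div divff ?mul1r //.
by rewrite tofrac_eq0 polyC_eq0.
Qed.

Lemma prod_XsubC_frac_eq (c : F) (zs ps us vs : seq F) :
  (c *: PX zs)%:F / (PX ps)%:F = (PX us)%:F / (PX vs)%:F ->
  c = 1 /\ perm_eq (zs ++ vs) (us ++ ps).
Proof.
have PX0 s : (PX s)%:F != 0 by rewrite tofrac_eq0 monic_neq0 // monic_prod_XsubC.
move/eqP; rewrite eqr_div // -!tofracM tofrac_eq => /eqP E.
have {}E : c *: PX (zs ++ vs) = PX (us ++ ps) by rewrite !big_cat /= scalerAl.
have c1 : c = 1.
  have := congr1 lead_coef E.
  by rewrite lead_coefZ !(monicP (monic_prod_XsubC _ _ _)) mulr1.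
by split=> //; apply: prod_XsubC_eq; rewrite -[PX (zs ++ vs)]scale1r -c1.
Qed.

End LinearFactors.

Section Factorization.
Variable L : closedFieldType.

Local Notation PX s := (\prod_(z <- s) ('X - z%:P) : {poly L}).

Definition zeros_of (m : FsfunZ L) : seq L :=
  @roots_mult L (finsupp m) (fun t => pos_part (m t)).
Definition poles_of (m : FsfunZ L) : seq L :=
  @roots_mult L (finsupp m) (fun t => neg_part (m t)).

Lemma factorization_frac beta c m : factorization beta c m ->
  beta = (c *: PX (zeros_of m))%:F / (PX (poles_of m))%:F.
Proof.
case=> _ ->; rewrite !prod_roots_mult -mul_polyC tofracM rmorph_prod -mulrA.
rewrite rmorph_prod -prodf_div; congr (_ * _); apply: eq_bigr => t _.
by rewrite !rmorphXn expfz_pos_neg_part.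
Qed.

End Factorization.

Section ShiftAutomorphism.
Variables (L : closedFieldType) (a : L).

Local Notation shift p := (p \Po ('X + a%:P)).
Local Notation PX s := (\prod_(z <- s) ('X - z%:P) : {poly L}).
Local Notation X t := (('X - t%:P)%:F : ratfun L).

Lemma shift_eq0 (p : {poly L}) : (shift p == 0) = (p == 0).
Proof. by rewrite comp_poly2_eq0 // size_XaddC. Qed.

Lemma shift_prod_XsubC (s : seq L) : shift (PX s) = PX [seq z - a | z <- s].
Proof.
rewrite rmorph_prod big_map; apply: eq_bigr => z _ /=.
by rewrite comp_polyB comp_polyX comp_polyC polyCB; ring.
Qed.

Lemma sigma_frac (n d : {poly L}) : d != 0 ->
  sigma a (n%:F / d%:F) = (shift n)%:F / (shift d)%:F.
Proof.
move=> d0; rewrite /sigma; set r := repr _.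
have dr0 : \d_r != 0 by exact: denom_ratioP.
have E : n * \d_r = \n_r * d.
  apply/eqP; rewrite -tofrac_eq !tofracM -eqr_div ?tofrac_eq0 //.
  exact/eqP/fracE.
apply/eqP; rewrite eqr_div ?tofrac_eq0 ?shift_eq0 //.
by rewrite -!tofracM -!comp_polyM E.
Qed.

Lemma sigma_tofrac (p : {poly L}) : sigma a p%:F = (shift p)%:F.
Proof.
have := @sigma_frac p 1 (oner_neq0 _).
by rewrite tofrac1 !divr1 comp_polyC tofrac1 divr1.
Qed.

Lemma sigma1 : sigma a 1 = 1.
Proof. by rewrite -tofrac1 sigma_tofrac rmorph1. Qed.

Lemma sigmaM (f g : ratfun L) : sigma a (f * g) = sigma a f * sigma a g.
Proof.
have [n1 [d1 [d10 ->]]] := fracP f; have [n2 [d2 [d20 ->]]] := fracP g.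
rewrite mulf_div -!tofracM !sigma_frac ?mulf_neq0 //.
by rewrite mulf_div -!tofracM !comp_polyM.
Qed.

Lemma sigmaV (f : ratfun L) : sigma a f^-1 = (sigma a f)^-1.
Proof.
have [n [d [d0 ->]]] := fracP f.
have [->|n0] := eqVneq n 0.
  by rewrite tofrac0 mul0r invr0 -tofrac0 sigma_tofrac comp_poly0 tofrac0 invr0.
by rewrite invf_div !sigma_frac // invf_div.
Qed.

Lemma Gsigma1 : Gsigma a 1.
Proof. by exists 1; rewrite sigma1 divr1 oner_neq0. Qed.

Lemma GsigmaM x y : Gsigma a x -> Gsigma a y -> Gsigma a (x * y).
Proof.
move=> [r [r0 ->]] [s [s0 ->]]; exists (r * s).
by split; [exact: mulf_neq0 | rewrite sigmaM mulf_div].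
Qed.

Lemma GsigmaV x : Gsigma a x -> Gsigma a x^-1.
Proof.
move=> [r [r0 ->]]; exists r^-1.
by rewrite invr_eq0 sigmaV invf_div invrK mulrC.
Qed.

Lemma GsigmaXz x (k : int) : Gsigma a x -> Gsigma a (x ^ k).
Proof.
move=> Gx; have GxX n : Gsigma a (x ^+ n).
  elim: n => [|n IH]; first by rewrite expr0; exact: Gsigma1.
  by rewrite exprS; exact: GsigmaM.
by case: k => n /=; [exact: GxX | exact/GsigmaV/GxX].
Qed.

Lemma Gsigma_prod (I : Type) (r : seq I) (P : pred I) (F : I -> ratfun L) :
  (forall i, P i -> Gsigma a (F i)) -> Gsigma a (\prod_(i <- r | P i) F i).
Proof. by move=> GF; apply: big_ind => //; [exact: Gsigma1 | exact: GsigmaM]. Qed.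

Lemma Gsigma_XsubC_div_shift t : Gsigma a (X t / X (t - a)).
Proof.
exists (X t); split; first by rewrite tofrac_eq0 polyXsubC_eq0.
rewrite sigma_tofrac comp_polyB comp_polyX comp_polyC polyCB.
by congr (_ / _%:F); ring.
Qed.

Lemma Gsigma_XsubC_div_natshift t (j : nat) : Gsigma a (X t / X (t - j%:R * a)).
Proof.
have X0 s : X s != 0 by rewrite tofrac_eq0 polyXsubC_eq0.
elim: j => [|j IH]; first by rewrite mul0r subr0 divff //; exact: Gsigma1.
have -> : t - j.+1%:R * a = t - j%:R * a - a by rewrite mulrSr mulrDl mul1r opprD addrA.
rewrite -(divfK (X0 (t - j%:R * a)) (X t)) -[_ * _ / _]mulrA.
exact: GsigmaM IH (Gsigma_XsubC_div_shift _).
Qed.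

Lemma in_orbit_refl t : Defs.in_orbit a t t.
Proof. by exists 0; rewrite mul0r addr0. Qed.

Lemma in_orbit_sym t s : Defs.in_orbit a t s -> Defs.in_orbit a s t.
Proof. by move=> [i ->]; exists (- i); rewrite mulrNz mulNr addrK. Qed.

Lemma in_orbit_trans t s u :
  Defs.in_orbit a t s -> Defs.in_orbit a s u -> Defs.in_orbit a t u.
Proof. by move=> [i ->] [j ->]; exists (i + j); rewrite intrD mulrDl addrA. Qed.

Lemma in_orbit_subr t s : Defs.in_orbit a t (s - a) <-> Defs.in_orbit a t s.
Proof.
split=> [[i Ei] | [i ->]].
  by exists (i + 1); rewrite intrD mulrDl mul1r addrA -Ei subrK.
by exists (i - 1); rewrite intrD mulrDl mulN1r addrA.
Qed.

Lemma Gsigma_XsubC_div_orbit t s : Defs.in_orbit a t s -> Gsigma a (X t / X s).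
Proof.
case=> [[j|j] ->].
  have := Gsigma_XsubC_div_natshift (t + j%:R * a) j; rewrite addrK => /GsigmaV.
  by rewrite invf_div.
by rewrite NegzE mulrNz mulNr; exact: Gsigma_XsubC_div_natshift.
Qed.

Definition orbit_of t : pred L := fun s => `[< Defs.in_orbit a t s >].

Lemma count_orbit_of_subr t (s : seq L) :
  count (orbit_of t) [seq z - a | z <- s] = count (orbit_of t) s.
Proof.
by rewrite count_map; apply: eq_count => z; exact/asbool_equiv_eq/in_orbit_subr.
Qed.

Lemma Gsigma_prod_XsubC beta : Gsigma a beta ->
  exists sn sd : seq L,
    beta = (PX (sn ++ [seq z - a | z <- sd]))%:F / (PX (sd ++ [seq z - a | z <- sn]))%:F.
Proof.
move=> [r [r0 ->]]; have [n [d [d0 Er]]] := fracP r.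
have n0 : n != 0 by apply: contraNneq r0 => n0; rewrite Er n0 tofrac0 mul0r.
have [sn En] := closed_field_poly_normal n; have [sd Ed] := closed_field_poly_normal d.
have lc0 : lead_coef d * lead_coef n != 0 by rewrite mulf_neq0 ?lead_coef_eq0.
move: (lead_coef n) (lead_coef d) En Ed lc0 => cn cd En Ed lc0.
exists sn, sd; rewrite Er sigma_frac // invf_div mulf_div -!tofracM.
rewrite En Ed !comp_polyZ !shift_prod_XsubC !mul_scale_prod_XsubC.
by rewrite [cn * cd]mulrC tofrac_scale_div.
Qed.

Lemma Fsfun_sigma_count m :
  (forall t, count (orbit_of t) (zeros_of m) = count (orbit_of t) (poles_of m)) ->
  Fsfun_sigma a m.
Proof.
move=> Hcount t; have := Hcount t; rewrite !count_roots_mult => /(congr1 Posz).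
rewrite !(big_morph Posz PoszD (erefl 0%:Z)) => Esum.
rewrite (eq_bigr _ (fun s _ => pos_neg_partE (m s))) sumrB.
by apply/eqP; rewrite subr_eq0; apply/eqP.
Qed.

Lemma Gsigma_factorization beta c m :
  factorization beta c m -> Gsigma a beta -> c = 1 /\ Fsfun_sigma a m.
Proof.
move=> /factorization_frac -> /Gsigma_prod_XsubC [sn [sd]].
move=> /prod_XsubC_frac_eq [-> Hperm]; split=> //.
apply: Fsfun_sigma_count => t; have := permP Hperm (orbit_of t).
rewrite !count_cat !count_orbit_of_subr [in RHS]addnC [(count _ sn + _)%N]addnC.
exact: addIn.
Qed.

(* [xchoose] depends only on the predicate, so points of one orbit get the same
   representative. *)
Definition orbit_rep t : L :=
  xchoose (ex_intro (orbit_of t) t (asboolT (in_orbit_refl t))).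

Lemma in_orbit_rep t : Defs.in_orbit a t (orbit_rep t).
Proof. exact/asboolP/(@xchooseP _ (orbit_of t)). Qed.

Lemma eq_orbit_rep t s : (orbit_rep t == orbit_rep s) = orbit_of t s.
Proof.
apply/eqP/asboolP => [Ets | Hts].
  have := in_orbit_sym (in_orbit_rep s); rewrite -Ets.
  exact: in_orbit_trans (in_orbit_rep t).
apply: eq_xchoose => u; apply: asbool_equiv_eq.
by split; [apply: in_orbit_trans (in_orbit_sym Hts) | apply: in_orbit_trans Hts].
Qed.

Lemma prod_orbit_rep_eq1 m : Fsfun_sigma a m ->
  \prod_(t <- finsupp m) X (orbit_rep t) ^ m t = 1.
Proof.
move=> Hm; rewrite (partition_big_imfset _ orbit_rep) big_seq.
rewrite big1 // => _ /imfsetP[t _ ->].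
rewrite (eq_bigr (fun s => X (orbit_rep t) ^ m s)); last by move=> s /eqP ->.
have X0 : X (orbit_rep t) != 0 by rewrite tofrac_eq0 polyXsubC_eq0.
rewrite -(big_morph _ (fun i j => expfzDr i j X0) (expr0z _)).
have -> : \sum_(s <- finsupp m | orbit_rep s == orbit_rep t) m s = 0.
  by rewrite -[RHS](Hm t); apply: eq_bigl => s; rewrite eq_sym eq_orbit_rep.
exact: expr0z.
Qed.

Lemma Fsfun_sigma_Gsigma m : Fsfun_sigma a m ->
  Gsigma a (\prod_(t <- finsupp m) X t ^ m t).
Proof.
move=> Hm.
have -> : \prod_(t <- finsupp m) X t ^ m t =
    \prod_(t <- finsupp m) (X t / X (orbit_rep t)) ^ m t *
    \prod_(t <- finsupp m) X (orbit_rep t) ^ m t.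
  rewrite -big_split; apply: eq_bigr => t _ /=.
  by rewrite -expfzMl divfK // tofrac_eq0 polyXsubC_eq0.
rewrite prod_orbit_rep_eq1 // mulr1; apply: Gsigma_prod => t _.
exact/GsigmaXz/Gsigma_XsubC_div_orbit/in_orbit_rep.
Qed.

End ShiftAutomorphism.

Theorem proposition4 (L : closedFieldType) (a : L) (ha : a != 0)
    (beta : ratfun L) (c : L) (m : FsfunZ L) :
  beta != 0 -> factorization beta c m ->
  (Gsigma a beta <-> (c = 1 /\ Fsfun_sigma a m)).
Proof.
move=> _ Hfact; split; first exact: Gsigma_factorization.
case=> c1 Hm; case: Hfact => _ ->; rewrite c1 polyC1 tofrac1 mul1r.
exact: Fsfun_sigma_Gsigma.
Qed.
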